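(* For every $P\in\mathcal C_3$ with $\mathcal L^r_P$ nonempty, $\mathrm{CrP}(\mathcal L^r_P)\subset\mathcal A_P$.
   Context: $\mathbb S$ is the unit circle, $\sigma(z)=z^3$. A chord joins two points of $\mathbb S$; distinct chords cross if they meet in the open unit disk $\mathbb D$; a chord $\overline{ab}$ is critical if $a\ne b$ and $\sigma(a)=\sigma(b)$. A cubic lamination is a family of pairwise non-crossing chords (leaves) containing all points of $\mathbb S$, with closed union, such that (1) images of leaves are leaves; (2) every leaf is an image of a leaf; (3) every non-critical leaf belongs to $3$ pairwise disjoint leaves with equal images. Nonempty: has a nondegenerate leaf. A chief is a nonempty cubic lamination minimal by inclusion among such. Gaps are closures of components of $\mathbb D$ minus the union of leaves; a lap is a finite gap or a nondegenerate leaf not on the boundary of a finite gap; invariant means $\sigma(G)=G$. A flower-like set of a cubic lamination is either $\{U\}$ with $U$ an infinite invariant gap, or, when there is an invariant lap $G$ and an infinite gap sharing an edge with $G$, the set of $G$ and all periodic infinite gaps sharing an edge with $G$; a chief is central if none of its leaves crosses an edge of a gap of some flower-like set, regular otherwise. A critical portrait is an unordered pair of non-crossing critical chords; $\mathrm{CrP}(\mathcal L)$ is the set of critical portraits none of whose chords crosses a leaf of $\mathcal L$; the central alliance $\mathcal A_0$ is the union of $\mathrm{CrP}(\mathcal K)$ over all central chiefs $\mathcal K$. $\mathcal C_3$: monic centered cubic polynomials with connected Julia set. A point is legal if it eventually maps to a repelling periodic point. $e^{2\pi i\alpha}\sim_P e^{2\pi i\beta}$ iff $\alpha=\beta$ or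 $\alpha,\beta$ rational with external rays $R_P(\alpha),R_P(\beta)$ landing at the same legal point; $\mathcal L^r_P$ is the set of edges of convex hulls of $\sim_P$-classes with their Hausdorff limits and points of $\mathbb S$. $\mathcal L^r_P$ is regular if nonempty and all its chiefs are regular; then its unique chief is $\mathcal L^c_P$ and $\mathcal A_P=\mathrm{CrP}(\mathcal L^c_P)$; otherwise $\mathcal A_P=\mathcal A_0$. *)

(* mathcomp-analysis over an abstract R : realType;
   the complex plane is R[i] (mathcomp-real-closed), viewed through the
   regular-module alias R[i]^o so that it carries its normed/topological
   structure over the scalar field R[i] (derivability = complex derivability). *)
From mathcomp Require Import all_boot all_order all_algebra.
From mathcomp Require Import all_classical all_reals all_analysis.
Import Order.TTheory GRing.Theory Num.Theory numFieldNormedType.Exports.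
From mathcomp Require complex.
Import complex.

Set Implicit Arguments.
Unset Strict Implicit.
Unset Printing Implicit Defensive.

Local Open Scope classical_set_scope.
Local Open Scope ring_scope.
Local Open Scope complex_scope.

Notation CC R := (GRing.regular (complex R)).

Definition circle {R : realType} : set (CC R) := [set z | `|z| = 1].
Definition odisk {R : realType} : set (CC R) := [set z | `|z| < 1].

Definition sigma3 {R : realType} (z : CC R) : CC R := z ^+ 3.

(* A chord is represented by its set of endpoints {a, b} (a, b on S);
   a = b gives a degenerate chord (a point of S). *)
Definition is_chord {R : realType} (l : set (CC R)) : Prop :=
  exists a b, circle a /\ circle b /\ l = [set a; b].

Definition degenerate {R : realType} (l : set (CC R)) : Prop :=
  exists a, l = [set a].

Definition seg {R : realType} (l : set (CC R)) : set (CC R) :=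
  [set z | exists (a b : CC R) (t : R),
     l = [set a; b] /\ 0 <= t <= 1 /\ z = (1 - t)%:C * a + t%:C * b].

Definition cross {R : realType} (l m : set (CC R)) : Prop :=
  l <> m /\ exists z, seg l z /\ seg m z /\ odisk z.

Definition critical {R : realType} (l : set (CC R)) : Prop :=
  exists a b, circle a /\ circle b /\ l = [set a; b] /\ a <> b /\
    sigma3 a = sigma3 b.

Definition chord_image {R : realType} (l : set (CC R)) : set (CC R) :=
  sigma3 @` l.

Definition union_leaves {R : realType} (L : set (set (CC R))) : set (CC R) :=
  \bigcup_(l in L) seg l.

Definition cubic_lamination {R : realType} (L : set (set (CC R))) : Prop :=
  (forall l, L l -> is_chord l) /\
  (forall l m, L l -> L m -> ~ cross l m) /\
  (forall a, circle a -> L [set a]) /\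
  closed (union_leaves L) /\
  (forall l, L l -> L (chord_image l)) /\
  (forall l, L l -> exists m, L m /\ l = chord_image m) /\
  (forall l, L l -> ~ critical l ->
     exists l2 l3, L l2 /\ L l3 /\
       seg l `&` seg l2 = set0 /\ seg l `&` seg l3 = set0 /\
       seg l2 `&` seg l3 = set0 /\
       chord_image l2 = chord_image l /\ chord_image l3 = chord_image l).

Definition lam_nonempty {R : realType} (L : set (set (CC R))) : Prop :=
  exists l, L l /\ ~ degenerate l.

Definition chief {R : realType} (K : set (set (CC R))) : Prop :=
  [/\ cubic_lamination K, lam_nonempty K &
      forall K', cubic_lamination K' -> lam_nonempty K' -> K' `<=` K -> K' = K].

Definition tboundary {R : realType} (X : set (CC R)) : set (CC R) :=
  closure X `\` interior X.

Definition gap {R : realType} (L : set (set (CC R))) (G : set (CC R)) : Prop :=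
  exists x, (odisk `\` union_leaves L) x /\
    G = closure (connected_component (odisk `\` union_leaves L) x).

Definition verts {R : realType} (X : set (CC R)) : set (CC R) := X `&` circle.

Definition finite_gap {R : realType} L (G : set (CC R)) : Prop :=
  gap L G /\ finite_set (verts G).
Definition infinite_gap {R : realType} L (G : set (CC R)) : Prop :=
  gap L G /\ infinite_set (verts G).

Definition edge {R : realType} (L : set (set (CC R))) (X : set (CC R))
    (l : set (CC R)) : Prop :=
  [/\ L l, ~ degenerate l & seg l `<=` tboundary X].

Definition lap {R : realType} (L : set (set (CC R))) (X : set (CC R)) : Prop :=
  finite_gap L X \/
  exists l, [/\ L l, ~ degenerate l, X = seg l &
    ~ exists G, finite_gap L G /\ seg l `<=` tboundary G].

Definition invariant {R : realType} (X : set (CC R)) : Prop :=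
  sigma3 @` verts X = verts X.
Definition periodic_set {R : realType} (X : set (CC R)) : Prop :=
  exists n, (0 < n)%N /\ iter n (fun A => sigma3 @` A) (verts X) = verts X.

Definition share_edge {R : realType} L (X Y : set (CC R)) : Prop :=
  exists l, edge L X l /\ edge L Y l.

Definition flower_like {R : realType} (L : set (set (CC R)))
    (F : set (set (CC R))) : Prop :=
  (exists U, [/\ infinite_gap L U, invariant U & F = [set U]]) \/
  (exists G, [/\ lap L G, invariant G,
     (exists U, infinite_gap L U /\ share_edge L G U) &
     F = [set X | X = G \/
                  [/\ infinite_gap L X, periodic_set X & share_edge L G X]]]).

Definition central {R : realType} (K : set (set (CC R))) : Prop :=
  forall L F G e l, cubic_lamination L -> flower_like L F -> F G -> gap L G ->
    edge L G e -> K l -> ~ cross l e.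

Definition regular_chief {R : realType} (K : set (set (CC R))) : Prop :=
  ~ central K.

Definition CrP {R : realType} (L : set (set (CC R))) :
    set (set (set (CC R))) :=
  [set Q | exists c1 c2, [/\ Q = [set c1; c2], critical c1, critical c2,
     ~ cross c1 c2 &
     forall l, L l -> ~ cross c1 l /\ ~ cross c2 l]].

Definition A0 {R : realType} : set (set (set (CC R))) :=
  [set Q | exists K, [/\ chief K, central K & CrP K Q]].

Definition monic_centered_cubic {R : realType} (P : {poly CC R}) : Prop :=
  [/\ size P = 4%N, P \is monic & P`_2 = 0].

Definition iterP {R : realType} (P : {poly CC R}) (n : nat) (z : CC R) :=
  iter n (fun w => P.[w]) z.

Definition filled_julia {R : realType} (P : {poly CC R}) : set (CC R) :=
  [set z | exists M : R, forall n, `|iterP P n z| <= M%:C].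
Definition julia {R : realType} (P : {poly CC R}) : set (CC R) :=
  tboundary (filled_julia P).

Definition in_C3 {R : realType} (P : {poly CC R}) : Prop :=
  monic_centered_cubic P /\ connected (julia P).

Definition boettcher {R : realType} (P : {poly CC R}) (phi : CC R -> CC R) :
    Prop :=
  [/\ (forall z, ~ filled_julia P z -> derivable phi z 1),
      {in ~` filled_julia P &, injective phi},
      phi @` (~` filled_julia P) = [set w | 1 < `|w|],
      (forall z, ~ filled_julia P z -> phi P.[z] = phi z ^+ 3) &
      (forall e : R, 0 < e -> exists M : R, forall z,
          M%:C < `|z| -> `|phi z / z - 1| < e%:C)].

(* the external ray R_P(u) (u in S, u = e^{2 pi i alpha}) lands at x *)
Definition ray_lands {R : realType} (P : {poly CC R}) (u x : CC R) : Prop :=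
  exists phi, boettcher P phi /\
    forall e : R, 0 < e -> exists d : R, 0 < d /\
      forall (z : CC R) (r : R), ~ filled_julia P z -> phi z = r%:C * u ->
        1 < r < 1 + d -> `|z - x| < e%:C.

Definition iter_poly {R : realType} (P : {poly CC R}) (k : nat) : {poly CC R} :=
  iter k (fun q => P \Po q) 'X.

Definition repelling_periodic {R : realType} (P : {poly CC R}) (y : CC R) :=
  exists k, [/\ (0 < k)%N, (iter_poly P k).[y] = y &
                1 < `|((iter_poly P k)^`()).[y]|].

Definition legal {R : realType} (P : {poly CC R}) (x : CC R) : Prop :=
  exists n, repelling_periodic P (iterP P n x).

Definition expi2pi {R : realType} (t : R) : CC R :=
  (cos (2 * pi * t)) +i* (sin (2 * pi * t)).

Definition rational_pt {R : realType} (u : CC R) : Prop :=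
  exists q : rat, u = expi2pi (ratr q).

Definition simP {R : realType} (P : {poly CC R}) (u v : CC R) : Prop :=
  u = v \/ [/\ rational_pt u, rational_pt v &
               exists x, [/\ legal P x, ray_lands P u x & ray_lands P v x]].

Definition simP_class {R : realType} (P : {poly CC R}) (u : CC R) :
    set (CC R) := [set v | circle v /\ simP P u v].

Definition convexC {R : realType} (A : set (CC R)) : Prop :=
  forall x y (t : R), A x -> A y -> 0 <= t <= 1 ->
    A ((1 - t)%:C * x + t%:C * y).
Definition hull {R : realType} (A : set (CC R)) : set (CC R) :=
  [set z | forall B, A `<=` B -> convexC B -> B z].

Definition hull_edge {R : realType} (A : set (CC R)) (l : set (CC R)) :
    Prop :=
  exists a b, [/\ A a, A b, a <> b, l = [set a; b] &
                 seg l `<=` tboundary (hull A)].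

Definition hausdorff_lim {R : realType} (s : nat -> set (CC R))
    (l : set (CC R)) : Prop :=
  forall e : R, 0 < e -> exists N, forall n, (N <= n)%N ->
    (forall z, seg (s n) z -> exists w, seg l w /\ `|z - w| < e%:C) /\
    (forall w, seg l w -> exists z, seg (s n) z /\ `|z - w| < e%:C).

Definition Lr {R : realType} (P : {poly CC R}) : set (set (CC R)) :=
  [set l | (exists u, circle u /\ hull_edge (simP_class P u) l) \/
           (exists s : nat -> set (CC R),
              (forall n, exists u, circle u /\ hull_edge (simP_class P u) (s n))
              /\ hausdorff_lim s l) \/
           (exists a, circle a /\ l = [set a])].

Definition lam_regular {R : realType} (L : set (set (CC R))) : Prop :=
  lam_nonempty L /\ forall K, chief K -> K `<=` L -> regular_chief K.

(* A_P: CrP(L^c_P) for the (unique) chief L^c_P of L^r_P if L^r_P is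
   regular, A_0 otherwise *)
Definition AP {R : realType} (P : {poly CC R}) : set (set (set (CC R))) :=
  [set Q | (lam_regular (Lr P) ->
              forall K, chief K -> K `<=` Lr P -> CrP K Q) /\
           (~ lam_regular (Lr P) -> A0 Q)].

From mathcomp Require Import all_boot all_order all_algebra.
From mathcomp Require Import all_classical all_reals all_analysis.
From mathcomp Require complex.
Import complex.
Local Open Scope classical_set_scope.

(* The only property of CrP that is needed is that it is
   antitone: a critical portrait compatible with every leaf of a family L
   is compatible with every leaf of any subfamily K of L (Lemma CrP_anti).
   The theorem then follows by the dichotomy in the definition of A_P:
   - if L^r_P is regular, every chief K contained in L^r_P satisfies
     CrP(L^r_P) <= CrP(K), which is the required inclusion;
   - otherwise, since L^r_P is nonempty, some chief K <= L^r_P is central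
     (Lemma central_chief_of_not_regular), and then
     CrP(L^r_P) <= CrP(K) <= A_0. *)

(* CrP reverses inclusion: fewer leaves impose fewer non-crossing
   constraints on a critical portrait. *)
Lemma CrP_anti {R : realType} {K L : set (set (CC R))} :
  K `<=` L -> CrP L `<=` CrP K.
Proof.
move=> KL Q [c1 [c2 [defQ crit1 crit2 nc12 ncL]]].
by exists c1, c2; split => // l /KL; exact: ncL.
Qed.

Lemma central_chief_of_not_regular {R : realType} {L : set (set (CC R))} :
  lam_nonempty L -> ~ lam_regular L ->
  exists K, [/\ chief K, central K & K `<=` L].
Proof.
move=> neL nregL.
have : ~ (forall K, chief K -> K `<=` L -> regular_chief K).
  by move=> allreg; apply: nregL.
move=> /existsNP [K /not_implyP [chiefK /not_implyP [KL /contrapT centralK]]].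
by exists K.
Qed.

Theorem lemmal (R : realType) (P : {poly CC R}) :
  in_C3 P -> lam_nonempty (Lr P) -> CrP (Lr P) `<=` AP P.
Proof.
move=> _ neLr Q CrPQ; split.
- by move=> _ K _ KLr; exact: CrP_anti KLr _ CrPQ.
- move=> nregLr.
  have [K [chiefK centralK KLr]] := central_chief_of_not_regular neLr nregLr.
  by exists K; split => //; exact: CrP_anti KLr _ CrPQ.
Qed.
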